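(* Every generalized Krull domain (in particular, every Noetherian integrally closed domain) is perinormal.
   Context: All rings are commutative with identity; ''local'' means having a unique maximal ideal; an overring of a domain $R$ is a ring between $R$ and its fraction field. A ring extension $A \subseteq B$ satisfies going-down if whenever $\mathfrak{p} \subset \mathfrak{q}$ are primes of $A$ and $Q$ is a prime of $B$ with $Q \cap A = \mathfrak{q}$, there is a prime $P \subseteq Q$ of $B$ with $P \cap A = \mathfrak{p}$. A domain $R$ is perinormal if every local overring $S$ of $R$ such that $R \subseteq S$ satisfies going-down is a localization of $R$. A ring $R$ satisfies (R$_1$) if $R_P$ is a valuation domain for every height one prime $P$ of $R$. Let $\operatorname{Spec}^1(R)$ denote the set of height one primes of $R$. A domain $R$ is a generalized Krull domain if (1) $R = \bigcap_{\mathfrak{p} \in \operatorname{Spec}^1(R)} R_{\mathfrak{p}}$, (2) every nonzero $r \in R$ lies in only finitely many height one primes, and (3) $R$ satisfies (R$_1$). *)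

(* A domain R is represented as a subring of a field K such
   that K is the fraction field of R; overrings are subrings of K containing R.
   Subsets of K are Prop-valued predicates K -> Prop. *)
From mathcomp Require Import all_boot all_algebra.
Set Implicit Arguments. Unset Strict Implicit. Unset Printing Implicit Defensive.
Import GRing.Theory.
Local Open Scope ring_scope.

Section Defs.
Variable K : fieldType.
Implicit Types (A R S I J P Q : K -> Prop).

Definition is_subring A : Prop :=
  A 0 /\ A 1 /\ (forall x y, A x -> A y -> A (x - y)) /\
  (forall x y, A x -> A y -> A (x * y)).

Definition is_fraction_field R : Prop :=
  forall x : K, exists a b, R a /\ R b /\ b != 0 /\ x = a / b.

Definition overring R S : Prop :=
  is_subring S /\ (forall x, R x -> S x).

Definition is_ideal A I : Prop :=
  (forall x, I x -> A x) /\ I 0 /\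
  (forall x y, I x -> I y -> I (x + y)) /\
  (forall a x, A a -> I x -> I (a * x)).

Definition is_prime A P : Prop :=
  is_ideal A P /\ ~ P 1 /\
  (forall x y, A x -> A y -> P (x * y) -> P x \/ P y).

Definition is_maximal A I : Prop :=
  is_ideal A I /\ ~ I 1 /\
  (forall J, is_ideal A J -> ~ J 1 -> (forall x, I x -> J x) -> forall x, J x -> I x).

Definition is_local A : Prop :=
  exists M, is_maximal A M /\ forall N, is_maximal A N -> forall x, N x <-> M x.

Definition going_down A B : Prop :=
  forall p q Q, is_prime A p -> is_prime A q -> (forall x, p x -> q x) ->
    is_prime B Q -> (forall x, (Q x /\ A x) <-> q x) ->
    exists P, is_prime B P /\ (forall x, P x -> Q x) /\
              (forall x, (P x /\ A x) <-> p x).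

Definition localization_at R (W : K -> Prop) : K -> Prop :=
  fun x => exists a w, R a /\ W w /\ x = a / w.

Definition is_mult_set R (W : K -> Prop) : Prop :=
  (forall w, W w -> R w) /\ W 1 /\ ~ W 0 /\
  (forall v w, W v -> W w -> W (v * w)).

Definition is_localization_of R S : Prop :=
  exists W, is_mult_set R W /\ forall x, S x <-> localization_at R W x.

Definition localize_prime R P : K -> Prop :=
  localization_at R (fun w => R w /\ ~ P w).

Definition height_one R P : Prop :=
  is_prime R P /\ (exists x, P x /\ x != 0) /\
  forall Q, is_prime R Q -> (forall x, Q x -> P x) ->
    (forall x, Q x -> x = 0) \/ (forall x, P x -> Q x).

Definition is_valuation_domain A : Prop :=
  forall x : K, x != 0 -> A x \/ A x^-1.

Definition R1 R : Prop :=
  forall P, height_one R P -> is_valuation_domain (localize_prime R P).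

Definition generalized_krull R : Prop :=
  (forall x, (forall P, height_one R P -> localize_prime R P x) -> R x) /\
  (* (2) each nonzero r lies in only finitely many height one primes *)
  (forall r, R r -> r != 0 ->
     exists (n : nat) (f : nat -> K -> Prop),
       forall P, height_one R P -> P r ->
         exists i, (i < n)%N /\ forall x, P x <-> f i x) /\
  R1 R.

Definition perinormal R : Prop :=
  forall S, overring R S -> is_local S -> going_down R S -> is_localization_of R S.

End Defs.

From mathcomp Require Import all_boot all_algebra ring.
From mathcomp Require Import boolp classical_sets.
Set Implicit Arguments. Unset Strict Implicit. Unset Printing Implicit Defensive.
Import GRing.Theory.
Local Open Scope ring_scope.

(* Let S be a local overring of R with maximal ideal M such that R ⊆ S
   satisfies going-down, and let W = R \ M.  Elements of W are units of S, so
   R_W ⊆ S.  Conversely, for x = a/b in S we find s ∈ W with s x ∈ R_P for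
   every height one prime P of R; then s x ∈ R by condition (1).  If P ⊆ M,
   going-down gives a prime of S lying over P, and since R_P is a valuation
   ring this forces S ⊆ R_P.  If P ⊄ M and b ∉ P, already x ∈ R_P.  The
   remaining P contain b, so there are finitely many of them.  For each such P
   with x ∉ R_P, the r ∈ R with r^k x ∈ R_P for some k form a prime ideal
   (R_P is a valuation ring) inside P and containing b, hence equal to P by
   height one; so a power of any element of P \ M is a suitable multiplier.
   The product of these multipliers is s. *)

Section Subring.
Variables (K : fieldType) (A : K -> Prop).
Hypothesis A_subring : is_subring A.

Lemma subring0 : A 0. Proof. by case: A_subring. Qed.
Lemma subring1 : A 1. Proof. by case: A_subring => _ []. Qed.

Lemma subringB x y : A x -> A y -> A (x - y).
Proof. by case: A_subring => _ [_ [+ _]]; apply. Qed.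

Lemma subringM x y : A x -> A y -> A (x * y).
Proof. by case: A_subring => _ [_ [_ +]]; apply. Qed.

Lemma subringN x : A x -> A (- x).
Proof. by move=> Ax; rewrite -sub0r; apply: subringB => //; apply: subring0. Qed.

Lemma subringD x y : A x -> A y -> A (x + y).
Proof. by move=> Ax Ay; rewrite -[y]opprK; apply: subringB => //; apply: subringN. Qed.

Lemma subringX x k : A x -> A (x ^+ k).
Proof.
move=> Ax; elim: k => [|k IHk]; first by rewrite expr0; apply: subring1.
by rewrite exprS; apply: subringM.
Qed.

End Subring.

Section Prime.
Variables (K : fieldType) (A P : K -> Prop).
Hypotheses (A_subring : is_subring A) (P_prime : is_prime A P).

Lemma prime_sub x : P x -> A x.
Proof. by case: P_prime => [[+ _] _]; apply. Qed.

Lemma prime0 : P 0. Proof. by case: P_prime => -[_ []]. Qed.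

Lemma prime_neq0 x : ~ P x -> x != 0.
Proof. by move=> nPx; apply: contra_notN nPx => /eqP ->; apply: prime0. Qed.

Lemma prime_notM x y : A x -> A y -> ~ P x -> ~ P y -> ~ P (x * y).
Proof. by case: P_prime => _ [_ Pmul] Ax Ay nPx nPy /(Pmul _ _ Ax Ay) []. Qed.

Lemma prime_notX x k : A x -> ~ P x -> ~ P (x ^+ k).
Proof.
move=> Ax nPx; elim: k => [|k IHk]; first by rewrite expr0; case: P_prime => _ [].
by rewrite exprS; apply: prime_notM => //; apply: subringX.
Qed.

End Prime.

Definition outside (K : fieldType) (R P : K -> Prop) : K -> Prop :=
  fun w => R w /\ ~ P w.

Lemma outside_mult_set (K : fieldType) (R S P : K -> Prop) :
  is_subring R -> (forall x, R x -> S x) -> is_prime S P ->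
  is_mult_set R (outside R P).
Proof.
move=> R_subring RS P_prime; split; first by move=> w [].
split; first by split; [apply: subring1 | case: P_prime => _ []].
split; first by move=> [_]; apply; apply: prime0 P_prime.
move=> v w [Rv nPv] [Rw nPw]; split; first exact: subringM.
exact: (prime_notM P_prime) (RS _ Rv) (RS _ Rw) nPv nPw.
Qed.

Section LocalizePrime.
Variables (K : fieldType) (R P : K -> Prop).
Hypotheses (R_subring : is_subring R) (P_prime : is_prime R P).

Let outside_mul v w : outside R P v -> outside R P w -> outside R P (v * w).
Proof. by have [_ [_ [_]]] := outside_mult_set R_subring (fun _ => id) P_prime; apply. Qed.

Lemma localize_prime_sub x : R x -> localize_prime R P x.
Proof.
move=> Rx; exists x, 1; rewrite divr1; split=> //; split=> //.
by split; [apply: subring1 | case: P_prime => _ []].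
Qed.

Lemma localize_prime_subring : is_subring (localize_prime R P).
Proof.
split; first by apply: localize_prime_sub; apply: subring0.
split; first by apply: localize_prime_sub; apply: subring1.
split=> ? ? [a [v [Ra [Wv ->]]]] [c [w [Rc [Ww ->]]]].
  exists (a * w - c * v), (v * w); split.
    by apply: subringB => //; apply: subringM => //; [case: Ww | case: Wv].
  split; first exact: outside_mul.
  have v0 := prime_neq0 P_prime (proj2 Wv); have w0 := prime_neq0 P_prime (proj2 Ww).
  by field; rewrite v0 w0.
exists (a * c), (v * w); split; first exact: subringM.
by split; [apply: outside_mul | rewrite invfM; ring].
Qed.

Lemma localize_prime_cancel y r :
  R r -> ~ P r -> localize_prime R P (y * r) -> localize_prime R P y.
Proof.
move=> Rr nPr [c [w [Rc [Ww yr]]]].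
exists c, (w * r); split=> //; split; first exact: outside_mul.
have r0 := prime_neq0 P_prime nPr.
by rewrite invfM mulrA -yr mulfK.
Qed.

End LocalizePrime.

Lemma valuation_ratio (K : fieldType) (V : K -> Prop) x y :
  is_valuation_domain V -> x != 0 -> y != 0 -> V (x / y) \/ V (y / x).
Proof.
move=> V_val x0 y0; rewrite -[y / x]invf_div; apply: V_val.
by rewrite mulf_neq0 ?invr_eq0.
Qed.

Definition power_multipliers (K : fieldType) (R P : K -> Prop) (x : K) : K -> Prop :=
  fun r => R r /\ exists k, localize_prime R P (r ^+ k * x).

Section HeightOne.
Variables (K : fieldType) (R p : K -> Prop) (x : K).
Hypotheses (R_subring : is_subring R) (p_height_one : height_one R p).
Hypothesis p_valuation : is_valuation_domain (localize_prime R p).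

Let p_prime : is_prime R p := proj1 p_height_one.
Local Notation V := (localize_prime R p).
Local Notation rad := (power_multipliers R p x).
Let V_subring : is_subring V := localize_prime_subring R_subring p_prime.
Let R_sub_V y : R y -> V y := localize_prime_sub R_subring p_prime (x := y).

Lemma power_multipliers0 : rad 0.
Proof.
split; first exact: subring0.
by exists 1%N; rewrite expr1 mul0r; apply: R_sub_V; apply: subring0.
Qed.

Lemma power_multipliersD r1 r2 : rad r1 -> rad r2 -> rad (r1 + r2).
Proof.
have [-> | r1_0] := eqVneq r1 0; first by rewrite add0r.
have [-> | r2_0] := eqVneq r2 0; first by rewrite addr0.
wlog Vq : r1 r2 r1_0 r2_0 / V (r1 / r2).
  move=> wlog_r rad1 rad2; have [Vq|Vq] := valuation_ratio p_valuation r1_0 r2_0.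
    exact: wlog_r.
  by rewrite addrC; apply: wlog_r.
move=> [Rr1 _] [Rr2 [k Vk]]; split; first exact: subringD.
exists k; have -> : (r1 + r2) ^+ k * x = (r2 ^+ k * x) * (r1 / r2 + 1) ^+ k.
  have -> : r1 + r2 = r2 * (r1 / r2 + 1) by field.
  by rewrite exprMn mulrAC.
apply: subringM => //; apply: subringX => //.
by apply: subringD => //; apply: R_sub_V; apply: subring1.
Qed.

Lemma power_multipliers_prime : ~ V x -> is_prime R rad.
Proof.
move=> nVx; split; last split.
- split; first by move=> r [].
  split; first exact: power_multipliers0.
  split; first exact: power_multipliersD.
  move=> a r Ra [Rr [k Vk]]; split; first exact: subringM.
  exists k; rewrite exprMn -mulrA; apply: subringM => //.
  by apply: R_sub_V; apply: subringX.
- by move=> [_ [k]]; rewrite expr1n mul1r.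
move=> r1 r2 Rr1 Rr2 [_ [k Vk]].
have [-> | r1_0] := eqVneq r1 0; first by left; apply: power_multipliers0.
have [-> | r2_0] := eqVneq r2 0; first by right; apply: power_multipliers0.
wlog Vq : r1 r2 Rr1 Rr2 Vk r1_0 r2_0 / V (r1 / r2).
  move=> wlog_r; have [Vq|Vq] := valuation_ratio p_valuation r1_0 r2_0.
    exact: wlog_r.
  by rewrite [r1 * r2]mulrC in Vk; case: (wlog_r r2 r1) => //; auto.
left; split=> //; exists (2 * k)%N.
have -> : r1 ^+ (2 * k) = (r1 * r2 * (r1 / r2)) ^+ k.
  by rewrite exprM; congr (_ ^+ _); field.
by rewrite exprMn mulrAC; apply: subringM => //; apply: subringX.
Qed.

Lemma power_multipliers_sub r : ~ V x -> rad r -> p r.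
Proof.
move=> nVx [Rr [k Vk]]; apply: contrapT => nPr; apply: nVx.
apply: (localize_prime_cancel R_subring p_prime (r := r ^+ k)).
- exact: subringX.
- exact: (prime_notX R_subring p_prime).
- by rewrite mulrC.
Qed.

Lemma height_one_power_mul : is_fraction_field R ->
  forall s, p s -> exists k, V (s ^+ k * x).
Proof.
move=> R_frac s ps; have [Vx | nVx] := pselect (V x).
  by exists 0%N; rewrite expr0 mul1r.
have [a [b [Ra [Rb [b0 xab]]]]] := R_frac x.
have rad_b : rad b.
  by split=> //; exists 1%N; rewrite expr1 xab mulrC divfK //; apply: R_sub_V.
have [_ [_ p_minimal]] := p_height_one.
have [rad0 | /(_ s ps) [] //] := p_minimal _ (power_multipliers_prime nVx)
  (fun r => power_multipliers_sub nVx).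
by move: b0; rewrite (rad0 b rad_b) eqxx.
Qed.

End HeightOne.

Section Maximal.
Variables (K : fieldType) (A : K -> Prop).

Lemma bigcup_proper_ideal (F : set (set K)) X0 y0 : F X0 -> X0 y0 ->
  total_on F subset -> (forall X y, F X -> X y -> is_ideal A X /\ ~ X 1) ->
  is_ideal A (\bigcup_(X in F) X)%classic /\ ~ (\bigcup_(X in F) X)%classic 1.
Proof.
move=> FX0 X0y0 F_chain F_ideal; split.
  2: by move=> [X FX X1]; have [_] := F_ideal _ _ FX X1; apply.
split; first by move=> z [X FX Xz]; have [[XA _] _] := F_ideal _ _ FX Xz; apply: XA.
split; first by exists X0 => //; have [[_ []]] := F_ideal _ _ FX0 X0y0.
split=> [z1 z2 [X1 FX1 Xz1] [X2 FX2 Xz2] | a z Aa [X FX Xz]].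
  have [X12 | X21] := F_chain _ _ FX1 FX2.
    exists X2 => //; have [[_ [_ [Xadd _]]] _] := F_ideal _ _ FX2 Xz2.
    exact/Xadd/Xz2/X12.
  exists X1 => //; have [[_ [_ [Xadd _]]] _] := F_ideal _ _ FX1 Xz1.
  exact/Xadd/X21.
exists X => //; have [[_ [_ [_ Xmul]]] _] := F_ideal _ _ FX Xz.
exact: Xmul.
Qed.

Lemma proper_ideal_sub_maximal (I : K -> Prop) : is_ideal A I -> ~ I 1 ->
  exists2 M, is_maximal A M & forall x, I x -> M x.
Proof.
move=> I_ideal nI1.
pose good B := is_ideal A B /\ ~ B 1 /\ (forall x, I x -> B x).
(* Zorn is applied to the sets that are empty or good: the empty chain has an
   empty union. *)
have [M [M_good M_max]] : exists M, ((exists y, M y) -> good M) /\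
    forall B, (M `<` B)%classic -> ~ ((exists y, B y) -> good B).
  apply: Zorn_bigcup => F F_good F_chain [y [X0 FX0 X0y]].
  have goodF X z : F X -> X z -> good X by move=> FX Xz; apply: F_good FX _; exists z.
  have [_ [_ I_sub_X0]] := goodF _ _ FX0 X0y.
  have [F_ideal nF1] := bigcup_proper_ideal FX0 X0y F_chain
    (fun X z FX Xz => let: conj XI (conj nX1 _) := goodF X z FX Xz in conj XI nX1).
  by split=> //; split=> // z Iz; exists X0 => //; apply: I_sub_X0.
have [y My] : exists y, M y.
  apply: contrapT => M_empty; apply: (M_max I); last by move=> _.
  split=> [z Mz | I_sub_M]; first by case: M_empty; exists z.
  by apply: M_empty; exists 0; apply: I_sub_M; case: I_ideal => _ [].
have [M_ideal [nM1 I_sub_M]] := M_good (ex_intro _ y My).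
exists M => //; split=> //; split=> // J J_ideal nJ1 M_sub_J z Jz.
apply: contrapT => nMz; apply: (M_max J) => [|_]; first by split=> // /(_ z Jz).
by split=> //; split=> // x Ix; apply/M_sub_J/I_sub_M.
Qed.

Hypothesis A_subring : is_subring A.

Lemma ideal_add_principal (I : K -> Prop) x : is_ideal A I -> A x ->
  is_ideal A (fun z => exists2 m, I m & exists2 s, A s & z = m + s * x).
Proof.
move=> [IA [I0 [Iadd Imul]]] Ax; split.
  by move=> _ [m Im [s As ->]]; apply: subringD => //; [apply: IA | apply: subringM].
split; first by exists 0 => //; exists 0; rewrite ?mul0r ?addr0 //; apply: subring0.
split=> [_ _ [m1 Im1 [s1 As1 ->]] [m2 Im2 [s2 As2 ->]] | a _ Aa [m Im [s As ->]]].
  exists (m1 + m2); first exact: Iadd.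
  by exists (s1 + s2); [apply: subringD | ring].
exists (a * m); first exact: Imul.
by exists (a * s); [apply: subringM | ring].
Qed.

Lemma maximal_prime (M : K -> Prop) : is_maximal A M -> is_prime A M.
Proof.
move=> [M_ideal [nM1 M_max]]; split=> //; split=> // x y Ax Ay Mxy.
have [Mx | nMx] := pselect (M x); [by left | right].
have J_ideal := ideal_add_principal M_ideal Ax.
have [[m Mm [s As one]] | nJ1] := pselect (exists2 m, M m & exists2 s, A s & 1 = m + s * x).
  have -> : y = y * m + s * (x * y) by rewrite -[y in LHS]mulr1 one; ring.
  by case: M_ideal => _ [_ [Madd Mmul]]; apply: Madd; apply: Mmul.
case: nMx; apply: (M_max _ J_ideal nJ1).
  by move=> z Mz; exists z => //; exists 0; rewrite ?mul0r ?addr0 //; apply: subring0.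
by exists 0; [case: M_ideal => _ [] | exists 1; rewrite ?mul1r ?add0r //; apply: subring1].
Qed.

Lemma local_inv_outside (M : K -> Prop) w :
  is_maximal A M -> (forall N, is_maximal A N -> forall x, N x <-> M x) ->
  A w -> ~ M w -> A w^-1.
Proof.
move=> M_max M_unique Aw nMw; apply: contrapT => nAw'.
have zero_ideal : is_ideal A (fun z => z = 0).
  split=> [_ -> | ]; first exact: subring0.
  by split=> //; split=> [? ? -> -> | ? ? _ ->]; rewrite ?addr0 ?mulr0.
have w0 : w != 0 := prime_neq0 (maximal_prime M_max) nMw.
have nJ1 : ~ exists2 m, m = 0 & exists2 s, A s & 1 = m + s * w.
  move=> [_ -> [s As one]]; apply: nAw'.
  by rewrite -[w^-1]mul1r one add0r mulfK.
have [N N_max wA_sub_N] :=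
  proper_ideal_sub_maximal (ideal_add_principal zero_ideal Aw) nJ1.
apply/nMw/(M_unique _ N_max)/wA_sub_N.
by exists 0 => //; exists 1; rewrite ?mul1r ?add0r //; apply: subring1.
Qed.

End Maximal.

Lemma common_multiplier (K : fieldType) (W : K -> Prop) (V : nat -> K -> Prop) x n :
  W 1 -> (forall u v, W u -> W v -> W (u * v)) ->
  (forall i t y, W t -> V i y -> V i (t * y)) ->
  (forall i, exists2 t, W t & V i (t * x)) ->
  exists2 s, W s & forall i, (i < n)%N -> V i (s * x).
Proof.
move=> W1 Wmul V_mulW V_multiplier; elim: n => [|n [s Ws sV]]; first by exists 1.
have [t Wt tV] := V_multiplier n; exists (t * s); first exact: Wmul.
move=> i; rewrite ltnS leq_eqVlt => /orP[/eqP -> | lt_in].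
  by rewrite [t * s]mulrC -mulrA; apply: V_mulW.
by rewrite -mulrA; apply: V_mulW => //; apply: sV.
Qed.

Lemma contraction_prime (K : fieldType) (R S Q : K -> Prop) :
  is_subring R -> (forall x, R x -> S x) -> is_prime S Q ->
  is_prime R (fun y => Q y /\ R y).
Proof.
move=> R_subring R_sub_S [[_ [Q0 [Qadd Qmul]]] [nQ1 Q_prime]].
split; last split; [|by case|].
  split; first by move=> y [].
  split; first by split=> //; apply: subring0.
  split=> [y z [Qy Ry] [Qz Rz] | a y Ra [Qy Ry]]; split.
  - exact: Qadd.
  - exact: subringD.
  - exact/Qmul/Qy/R_sub_S.
  - exact: subringM.
move=> y z Ry Rz [/(Q_prime _ _ (R_sub_S _ Ry) (R_sub_S _ Rz)) [Qy | Qz] _].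
  by left.
by right.
Qed.

Lemma lying_over_localize_prime (K : fieldType) (R S Q p : K -> Prop) :
  is_subring R -> (forall x, R x -> S x) -> is_prime S Q -> is_prime R p ->
  (forall y, Q y /\ R y <-> p y) -> is_valuation_domain (localize_prime R p) ->
  forall x, S x -> localize_prime R p x.
Proof.
move=> R_subring R_sub_S Q_prime p_prime Q_over_p p_valuation x Sx.
have [-> | x0] := eqVneq x 0.
  by apply: (localize_prime_sub R_subring p_prime); apply: subring0.
have [// | [c [w [Rc [[Rw npw] x_inv]]]]] := p_valuation x x0.
apply: contrapT => nVx.
have c0 : c != 0 by apply/eqP => c0; move: x0; rewrite -invr_eq0 x_inv c0 mul0r eqxx.
have pc : p c.
  by apply: contrapT => npc; apply/nVx; exists w, c; rewrite -invf_div -x_inv invrK.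
have Qc : Q c by case/Q_over_p: pc.
have Qw : Q w.
  have -> : w = x * c by rewrite -[x]invrK x_inv invf_div mulfVK.
  by case: Q_prime => -[_ [_ [_ Qmul]]] _; apply: Qmul.
by apply/npw/Q_over_p.
Qed.

Section LocalOverring.
Variables (K : fieldType) (R S M : K -> Prop).
Hypotheses (R_subring : is_subring R) (S_subring : is_subring S)
  (R_sub_S : forall x, R x -> S x).
Hypotheses (M_max : is_maximal S M)
  (M_unique : forall N, is_maximal S N -> forall x, N x <-> M x).

Let M_prime : is_prime S M := maximal_prime S_subring M_max.

Lemma outside_mult_set_local : is_mult_set R (outside R M).
Proof. exact: outside_mult_set R_subring R_sub_S M_prime. Qed.

Lemma localization_outside_sub x : localization_at R (outside R M) x -> S x.
Proof.
move=> [a [w [Ra [[Rw nMw] ->]]]]; apply: subringM => //; first exact: R_sub_S.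
exact: (local_inv_outside S_subring M_max M_unique (R_sub_S Rw) nMw).
Qed.

Lemma going_down_localize_prime P x :
  going_down R S -> is_prime R P -> is_valuation_domain (localize_prime R P) ->
  (forall y, P y -> M y) -> S x -> localize_prime R P x.
Proof.
move=> gd P_prime P_valuation P_sub_M.
have M_over := contraction_prime R_subring R_sub_S M_prime.
have P_sub_MR y : P y -> M y /\ R y.
  by move=> Py; split; [apply: P_sub_M | apply: (prime_sub P_prime)].
have [Q [Q_prime [_ Q_over_P]]] :=
  gd _ _ _ P_prime M_over P_sub_MR M_prime (fun y => iff_refl _).
exact: (lying_over_localize_prime R_subring R_sub_S Q_prime P_prime Q_over_P P_valuation).
Qed.

Lemma outside_multiplier P x :
  is_fraction_field R -> height_one R P -> is_valuation_domain (localize_prime R P) ->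
  ~ (forall y, P y -> M y) -> exists2 t, outside R M t & localize_prime R P (t * x).
Proof.
move=> R_frac P_height_one P_valuation P_notsub_M.
have [s Ps nMs] : exists2 s, P s & ~ M s.
  apply: contrapT => none; apply: P_notsub_M => y Py.
  by apply: contrapT => nMy; apply: none; exists y.
have Rs : R s := prime_sub (proj1 P_height_one) Ps.
have [k Vk] := height_one_power_mul x R_subring P_height_one P_valuation R_frac Ps.
exists (s ^+ k) => //; split; first exact: subringX.
exact: (prime_notX S_subring M_prime (R_sub_S Rs) nMs).
Qed.

Lemma outside_multiplier_family (f : nat -> K -> Prop) n x :
  is_fraction_field R -> R1 R ->
  exists2 s, outside R M s & forall P, height_one R P -> ~ (forall y, P y -> M y) ->
    (exists i, (i < n)%N /\ forall z, P z <-> f i z) -> localize_prime R P (s * x).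
Proof.
move=> R_frac R_R1.
have [_ [W1 [_ Wmul]]] := outside_mult_set_local.
pose V i y := forall P, height_one R P -> ~ (forall y, P y -> M y) ->
  (forall z, P z <-> f i z) -> localize_prime R P y.
have [s Ws sxV] : exists2 s, outside R M s & forall i, (i < n)%N -> V i (s * x).
  apply: common_multiplier => // [i t y [Rt _] Vy P P_h1 P_notsub Pf | i].
    have P_prime := proj1 P_h1.
    apply: (subringM (localize_prime_subring R_subring P_prime)); last exact: Vy.
    exact: (localize_prime_sub R_subring P_prime).
  have [[P0 [P0_h1 [P0_notsub P0f]]] | no_P] :=
    pselect (exists P0, height_one R P0 /\ ~ (forall y, P0 y -> M y) /\
                        forall z, P0 z <-> f i z).
    have [t Wt Vt] := outside_multiplier x R_frac P0_h1 (R_R1 _ P0_h1) P0_notsub.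
    exists t => // P _ _ Pf; suff -> : P = P0 by [].
    by apply/funext => z; apply/propext; rewrite Pf P0f.
  by exists 1 => // P P_h1 P_notsub Pf; case: no_P; exists P.
by exists s => // P P_h1 P_notsub [i [lt_in Pf]]; apply: (sxV i lt_in).
Qed.

Lemma local_overring_multiplier x :
  is_fraction_field R -> generalized_krull R -> going_down R S -> S x ->
  exists2 s, outside R M s & R (s * x).
Proof.
move=> R_frac [R_int [R_finite R_R1]] gd Sx.
have [a [b [Ra [Rb [b0 xab]]]]] := R_frac x.
have [n [f f_cover]] := R_finite b Rb b0.
have [s Ws sxV] := outside_multiplier_family f n x R_frac R_R1.
exists s => //; apply: R_int => P P_h1.
have [P_prime _] := P_h1.
have V_subring := localize_prime_subring R_subring P_prime.
have Vs := localize_prime_sub R_subring P_prime (proj1 Ws).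
have [P_sub_M | P_notsub_M] := pselect (forall y, P y -> M y).
  apply: (subringM V_subring Vs).
  exact: (going_down_localize_prime gd P_prime (R_R1 _ P_h1) P_sub_M Sx).
have [Pb | nPb] := pselect (P b); first exact: sxV (f_cover P P_h1 Pb).
by apply: (subringM V_subring Vs); rewrite xab; exists a, b.
Qed.

Lemma local_overring_sub_localization x :
  is_fraction_field R -> generalized_krull R -> going_down R S -> S x ->
  localization_at R (outside R M) x.
Proof.
move=> R_frac R_krull gd Sx.
have [s [Rs nMs] Rsx] := local_overring_multiplier R_frac R_krull gd Sx.
exists (s * x), s; split=> //; split=> //.
by rewrite mulrAC divff ?mul1r // (prime_neq0 M_prime nMs).
Qed.

End LocalOverring.

Theorem theorem3p10 (K : fieldType) (R : K -> Prop) :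
  is_subring R -> is_fraction_field R -> generalized_krull R -> perinormal R.
Proof.
move=> R_subring R_frac R_krull S [S_subring R_sub_S] [M [M_max M_unique]] gd.
exists (outside R M).
split; first exact: (outside_mult_set_local R_subring S_subring R_sub_S M_max).
move=> x; split.
  exact: (local_overring_sub_localization R_subring S_subring R_sub_S M_max).
exact: (localization_outside_sub S_subring R_sub_S M_max M_unique).
Qed.
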